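(* In the IM-OCP setting described in the context, with $r_1\in[0,B]$ and any non-increasing sequence of positive step sizes $(\eta_t)_{t\ge1}$, for every $T\ge1$, $$\overline{\mathrm{Reg}}(T):=\mathbb{E}\left[\sum_{i=1}^T\ell_{1-\alpha}(r_i,r_i^* )\frac{\mathrm{obs}_i}{p_i}\right]-\min_{u\in\mathbb{R}}\sum_{i=1}^T\ell_{1-\alpha}(u,r_i^* )\le\frac{\mathbb{E}[D_T]}{\eta_T}+\frac{1}{2\mu\,p_{\min}}\sum_{i=1}^T\eta_i,$$ where $p_{\min}=\min_{t\in\{1,\dots,T\}}p_t$, $D_T=\max_{t\in\{1,\dots,T\}}\mathcal{B}_R\big(q_\alpha(r^*_{1:T}),r_t\big)$, and expectations are over the feedback indicators $(\mathrm{obs}_t)$.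
   Context: Fix $\alpha\in(0,1)$ and $B>0$. Let $(r_t^* )_{t\ge1}$ be an arbitrary deterministic sequence of scores with $r_t^*\in[0,B]$. Given thresholds $r_t$, the miscoverage indicator is $E_t=\mathbb{1}\{r_t^*>r_t\}$. The quantile loss is $\ell_{1-\alpha}(r,r^* )=(\alpha-\mathbb{1}\{r<r^*\})(r-r^* )$, and $q_\alpha(r^*_{1:T})$ denotes a minimizer over $u\in\mathbb{R}$ of $\sum_{t=1}^T\ell_{1-\alpha}(u,r_t^* )$. Let $P$ be a probability distribution on $[0,B]$ with bounded density, $\sigma>0$, and $R(r)=\mathbb{E}_{r^*\sim P}[\ell_{1-\alpha}(r,r^* )]+\frac{\sigma}{2}r^2$; $R$ is differentiable and $\nabla R$ is a continuous strictly increasing bijection of $\mathbb{R}$. Let $\mu>0$ be a constant such that $R$ is $\mu$-strongly convex (e.g. $\mu=\sigma$). The Bregman divergence of $R$ is $\mathcal{B}_R(u,v)=R(u)-R(v)-\nabla R(v)(u-v)$. Feedback: $p_t\in(0,1]$ and $(\mathrm{obs}_t)_{t\ge1}$ are independent Bernoulli random variables with $\Pr(\mathrm{obs}_t=1)=p_t$. IM-OCP: given $r_1$ and step sizes $\eta_t>0$, for $t\ge2$ the threshold $r_t$ is defined by $$\nabla R(r_t)=\nabla R(r_{t-1})-\eta_{t-1}(\alpha-E_{t-1})\frac{\mathrm{obs}_{t-1}}{p_{t-1}}.$$ *)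

From HB Require Import structures.
From mathcomp Require Import all_boot all_order all_algebra.
From mathcomp Require Import all_classical all_reals all_analysis.
Set Implicit Arguments. Unset Strict Implicit. Unset Printing Implicit Defensive.
Import Order.TTheory GRing.Theory Num.Theory.
Import numFieldNormedType.Exports.
Local Open Scope classical_set_scope.
Local Open Scope ring_scope.

Section Defs.
Variable R : realType.

Definition qloss (alpha r rs : R) : R := (alpha - (if r < rs then 1 else 0)) * (r - rs).

Definition bounded_density_on (B : R) (P : probability R R) : Prop :=
  P `[0, B]%classic = 1%E /\
  exists (f : R -> R) (M : R),
    measurable_fun setT f /\ (forall x, 0 <= f x <= M) /\
    forall A : set R, measurable A ->
      P A = (\int[@lebesgue_measure R]_(x in A) (f x)%:E)%E.

Definition regR (alpha sigma : R) (P : probability R R) (r : R) : R :=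
  fine (\int[P]_x (qloss alpha r x)%:E)%E + sigma / 2 * r ^+ 2.

Definition strongly_convex (mu : R) (f : R -> R) : Prop :=
  forall (x y l : R), 0 <= l <= 1 ->
    f (l * x + (1 - l) * y) <=
      l * f x + (1 - l) * f y - mu / 2 * l * (1 - l) * (x - y) ^+ 2.

Definition bregman (f : R -> R) (u v : R) : R :=
  f u - f v - derive1 f v * (u - v).

(* Expectation over independent Bernoulli feedback indicators obs_1..obs_T,
   Pr(obs_t = 1) = p_t.  An outcome w : {ffun 'I_T -> bool} gives
   obs_t = w (t-1) for 1 <= t <= T (and obs_t = false otherwise, irrelevant
   for quantities depending only on obs_1..obs_T). *)
Definition obs_of (T : nat) (w : {ffun 'I_T -> bool}) (t : nat) : bool :=
  match insub t.-1 with
  | Some i => if (1 <= t)%N then w i else false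
  | None => false
  end.

Definition bern_weight (T : nat) (p : nat -> R) (w : {ffun 'I_T -> bool}) : R :=
  \prod_(i < T) (if w i then p i.+1 else 1 - p i.+1).

Definition bern_expect (T : nat) (p : nat -> R) (X : (nat -> bool) -> R) : R :=
  \sum_(w : {ffun 'I_T -> bool}) bern_weight p w * X (obs_of w).

End Defs.

(* Along every feedback path, IM-OCP is mirror descent with mirror map [R] on
   the importance-weighted subgradients [g_t = (alpha - E_t) obs_t / p_t] of
   the quantile loss.  The three-point identity of the Bregman divergence and
   the strong convexity of [R] bound each round's weighted regret by
   [(B_R(q, r_t) - B_R(q, r_(t+1))) / eta_t + eta_t g_t^2 / (2 mu)], the
   first terms telescope because the steps do not increase, and
   [g_t^2 <= obs_t / p_t^2].  Taking expectations, [E[obs_t / p_t] = 1] removes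
   the weights from the comparator's loss and leaves [sum_t eta_t / (2 mu p_t)]. *)

From HB Require Import structures.
From mathcomp Require Import all_boot all_order all_algebra.
From mathcomp Require Import all_classical all_reals all_analysis.
From mathcomp Require Import ring lra.

Set Implicit Arguments.
Unset Strict Implicit.
Unset Printing Implicit Defensive.

Import Order.TTheory GRing.Theory Num.Theory.
Import numFieldNormedType.Exports.
Local Open Scope ring_scope.

Lemma telescope_nonincreasing_steps (R : realFieldType) (b eta : nat -> R) (D : R) n :
  (1 <= n)%N -> (forall t, (1 <= t)%N -> 0 < eta t) ->
  (forall s t, (1 <= s)%N -> (s <= t)%N -> eta t <= eta s) ->
  (forall t, (1 <= t <= n)%N -> b t <= D) ->
  \sum_(1 <= t < n.+1) (b t - b t.+1) / eta t <= (D - b n.+1) / eta n.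
Proof.
move=> + eta_gt0 eta_noninc; elim: n => [//|[|n] IH] _ bD.
  by rewrite big_nat1 ler_pM2r ?invr_gt0 ?eta_gt0 // lerD2r bD.
rewrite big_nat_recr //=.
have IHn : \sum_(1 <= t < n.+2) (b t - b t.+1) / eta t <= (D - b n.+2) / eta n.+1.
  by apply: IH => // t /andP[t1 tn]; rewrite bD // t1 leqW.
have Db : 0 <= D - b n.+2 by rewrite subr_ge0; apply: bD; rewrite /= leqnn.
have inv_le : (eta n.+1)^-1 <= (eta n.+2)^-1.
  by rewrite lef_pV2 ?posrE ?eta_gt0 ?eta_noninc.
have := ler_wpM2l Db inv_le; rewrite !mulrBl in IHn *; lra.
Qed.

Lemma sum_div_le_div_bigmin (R : realFieldType) (a p : nat -> R) (c : R) n :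
  0 < c -> (forall i, (1 <= i)%N -> 0 < p i) -> (forall i, (1 <= i)%N -> 0 <= a i) ->
  \sum_(1 <= i < n.+1) a i / (p i * c)
  <= (c * \big[Num.min/p 1%N]_(1 <= t < n.+1) p t)^-1 * \sum_(1 <= i < n.+1) a i.
Proof.
move=> c0 p_gt0 a_ge0; set pmin := \big[Num.min/_]_(_ <= t < _) _.
have pmin_gt0 : 0 < pmin.
  rewrite /pmin big_nat; apply: (big_ind (fun x => 0 < x)); first exact: p_gt0.
    by move=> x y x0 y0; rewrite lt_min x0 y0.
  by move=> i /andP[i1 _]; exact: p_gt0.
rewrite mulr_sumr !big_nat; apply: ler_sum => i /andP[i1 iT].
rewrite mulrC; apply: ler_wpM2r; first exact: a_ge0.
rewrite lef_pV2 ?posrE ?mulr_gt0 ?p_gt0 // mulrC ler_pM2r //.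
by rewrite ge_bigmin_seq // mem_index_iota i1.
Qed.

Definition ipw {R : realFieldType} (p : nat -> R) (obs : nat -> bool) (i : nat) : R :=
  (if obs i then 1 else 0) / p i.

Lemma qloss_subgradient (R : realType) (alpha x q s : R) :
  qloss alpha x s - qloss alpha q s <= (alpha - (if x < s then 1 else 0)) * (x - q).
Proof. by rewrite /qloss; case: ifP => xs; case: ifP => qs; nra. Qed.

Lemma sqr_mul_ipw_le (R : realFieldType) (c : R) (p : nat -> R) obs i :
  c ^+ 2 <= 1 -> 0 < p i -> (c * ipw p obs i) ^+ 2 <= ipw p obs i / p i.
Proof.
move=> c1 p0; rewrite /ipw; case: (obs i); last by rewrite !mul0r mulr0 expr0n.
rewrite !mul1r exprMn -expr2 -[X in _ <= X]mul1r.
by rewrite ler_wpM2r ?sqr_ge0.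
Qed.

Section MirrorDescent.
Local Open Scope classical_set_scope.
Variables (R : realType) (f : R -> R) (mu : R).
Hypotheses (f_derivable : forall x, derivable f x 1)
           (f_sconvex : strongly_convex mu f) (mu_gt0 : 0 < mu).

(* The difference quotient of [f] at [a] in direction [b - a] over [h] in
   (0, 1) is bounded by the chord slope minus [mu/2 (1 - h) (b - a)^2];
   let [h] tend to [0+]. *)
Lemma strongly_convex_tangent a b :
  f a + derive1 f a * (b - a) + mu / 2 * (b - a) ^+ 2 <= f b.
Proof.
set v := b - a.
have Dv : 'D_v f a = v * derive1 f a.
  have df : differentiable f a by apply/derivable1_diffP.
  by rewrite derive1E !deriveE // -{1}(mulr1 v) -[v * 1]/(v *: (1:R)) linearZ.
have quot_cvg : (fun h => h^-1 *: ((f \o shift a) (h *: v) - f a)) @ 0^'+ -->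
                'D_v f a.
  have dv : derivable f a v by apply: diff_derivable; apply/derivable1_diffP.
  apply: cvg_trans dv; apply: cvg_app; apply: within_subset => x /= x0.
  by rewrite gt_eqF.
have bound_cvg : (fun h : R => f b - f a - mu / 2 * v ^+ 2 + mu / 2 * v ^+ 2 * h)
    @ 0^'+ --> f b - f a - mu / 2 * v ^+ 2.
  rewrite -[X in _ --> X]addr0; apply: cvgD; first exact: cvg_cst.
  rewrite -[X in _ --> X](mulr0 (mu / 2 * v ^+ 2)); apply: cvgMr.
  exact/cvg_at_right_filter/cvg_id.
suff : v * derive1 f a <= f b - f a - mu / 2 * v ^+ 2 by rewrite mulrC; lra.
rewrite -Dv; apply: (ler_cvg_to quot_cvg bound_cvg); near=> h.
have h0 : 0 < h by near: h; exact: nbhs_right_gt.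
have h1 : h < 1 by near: h; exact: nbhs_right_lt.
rewrite /= -[_ *: _]/(h^-1 * _) ler_pdivrMl //.
have := @f_sconvex b a h; rewrite (ltW h0) (ltW h1) => /(_ isT).
have -> : h *: v + a = h * b + (1 - h) * a by rewrite /v -[_ *: _]/(h * _); ring.
rewrite /v; lra.
Unshelve. all: end_near.
Qed.

Lemma bregman_ge0 u v : 0 <= bregman f u v.
Proof.
have := strongly_convex_tangent v u; rewrite /bregman.
have : 0 <= mu / 2 * (u - v) ^+ 2 by rewrite mulr_ge0 ?sqr_ge0 ?divr_ge0 ?ltW.
lra.
Qed.

Lemma mirror_descent_step q a b e g :
  0 < e -> derive1 f b = derive1 f a - e * g ->
  g * (a - q) <= (bregman f q a - bregman f q b) / e + e * g ^+ 2 / (2 * mu).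
Proof.
move=> e0 upd; set G := e * g.
have three_point : bregman f q a - bregman f q b =
    f b - f a - derive1 f a * (b - a) + G * (b - q).
  by rewrite /bregman upd /G; ring.
have tangent := strongly_convex_tangent a b.
have amgm : G * (a - b) <= mu / 2 * (b - a) ^+ 2 + G ^+ 2 / (2 * mu).
  have : 0 <= (mu * (a - b) - G) ^+ 2 / (2 * mu).
    by rewrite divr_ge0 ?sqr_ge0 ?mulr_ge0 ?ltW.
  suff -> : (mu * (a - b) - G) ^+ 2 / (2 * mu) =
            mu / 2 * (b - a) ^+ 2 + G ^+ 2 / (2 * mu) - G * (a - b) by lra.
  by field; rewrite gt_eqF.
have descent : G * (a - q) <= bregman f q a - bregman f q b + G ^+ 2 / (2 * mu).
  by rewrite three_point; lra.
have -> : (bregman f q a - bregman f q b) / e + e * g ^+ 2 / (2 * mu) =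
          e^-1 * (bregman f q a - bregman f q b + G ^+ 2 / (2 * mu)).
  by rewrite /G; field; rewrite ?gt_eqF //; lra.
by rewrite ler_pdivlMl // mulrA.
Qed.

Lemma ipw_mirror_descent_regret alpha q (eta p rs x : nat -> R) obs T :
  0 < alpha < 1 -> (forall t, (1 <= t)%N -> 0 < p t) ->
  (forall t, (1 <= t)%N -> 0 < eta t) ->
  (forall s t, (1 <= s)%N -> (s <= t)%N -> eta t <= eta s) ->
  (forall t, (1 <= t)%N -> derive1 f (x t.+1) =
     derive1 f (x t) - eta t * (alpha - (if x t < rs t then 1 else 0)) * ipw p obs t) ->
  (1 <= T)%N ->
  \sum_(1 <= i < T.+1) qloss alpha (x i) (rs i) * ipw p obs i
  <= \sum_(1 <= i < T.+1) qloss alpha q (rs i) * ipw p obs i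
     + (\big[Num.max/bregman f q (x 1%N)]_(1 <= t < T.+1) bregman f q (x t) / eta T
        + \sum_(1 <= i < T.+1) eta i / (p i * (2 * mu)) * ipw p obs i).
Proof.
move=> alpha01 p_gt0 eta_gt0 eta_noninc upd T1.
set D := \big[Num.max/_]_(_ <= t < _) _.
have per_round i : (1 <= i)%N ->
    (qloss alpha (x i) (rs i) - qloss alpha q (rs i)) * ipw p obs i <=
    (bregman f q (x i) - bregman f q (x i.+1)) / eta i
    + eta i / (p i * (2 * mu)) * ipw p obs i.
  move=> i1; have p0 := p_gt0 i i1; have e0 := eta_gt0 i i1.
  set c := alpha - (if x i < rs i then 1 else 0); set w := ipw p obs i.
  have w0 : 0 <= w by apply: divr_ge0; [case: (obs i) | exact: ltW].
  have c1 : c ^+ 2 <= 1 by rewrite /c; case: ifP => _; nra.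
  apply: (@le_trans _ _ ((c * w) * (x i - q))).
    by rewrite mulrAC; apply: ler_wpM2r => //; exact: qloss_subgradient.
  apply: le_trans (mirror_descent_step q (b := x i.+1) e0 _) _.
    by rewrite upd // -mulrA.
  have -> : eta i / (p i * (2 * mu)) * w = eta i / (2 * mu) * (w / p i).
    by field; rewrite !gt_eqF.
  rewrite lerD2l mulrAC; apply: ler_wpM2l; first by rewrite divr_ge0 ?mulr_ge0 ?ltW.
  exact: sqr_mul_ipw_le.
have regret_le : \sum_(1 <= i < T.+1) qloss alpha (x i) (rs i) * ipw p obs i
    - \sum_(1 <= i < T.+1) qloss alpha q (rs i) * ipw p obs i
    <= \sum_(1 <= i < T.+1) (bregman f q (x i) - bregman f q (x i.+1)) / eta i
       + \sum_(1 <= i < T.+1) eta i / (p i * (2 * mu)) * ipw p obs i.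
  rewrite -sumrB -big_split !big_nat; apply: ler_sum => i /andP[i1 _].
  by rewrite -mulrBl; exact: per_round.
have telescoped : \sum_(1 <= i < T.+1) (bregman f q (x i) - bregman f q (x i.+1)) / eta i
    <= (D - bregman f q (x T.+1)) / eta T.
  apply: telescope_nonincreasing_steps => // t /andP[t1 tT].
  by apply: (@le_bigmax_seq _ _ nat); rewrite // mem_index_iota ltnS t1.
have last_ge0 : 0 <= bregman f q (x T.+1) / eta T.
  by rewrite divr_ge0 ?bregman_ge0 ?ltW ?eta_gt0.
rewrite mulrBl in telescoped; lra.
Qed.

End MirrorDescent.

Section BernoulliExpectation.
Variables (R : realType) (T : nat) (p : nat -> R).
Hypothesis p_prob : forall t, (1 <= t)%N -> 0 < p t <= 1.

Lemma bern_weight_ge0 (w : {ffun 'I_T -> bool}) : 0 <= bern_weight p w.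
Proof.
apply: prodr_ge0 => i _; have /andP[p0 p1] := p_prob (ltn0Sn i).
by case: (w i); lra.
Qed.

Lemma ler_bern_expect (X Y : (nat -> bool) -> R) :
  (forall obs, X obs <= Y obs) -> bern_expect T p X <= bern_expect T p Y.
Proof.
move=> XY; apply: ler_sum => w _.
by apply: ler_wpM2l; [exact: bern_weight_ge0 | exact: XY].
Qed.

Lemma bern_expectD (X Y : (nat -> bool) -> R) :
  bern_expect T p (fun o => X o + Y o) = bern_expect T p X + bern_expect T p Y.
Proof. by rewrite /bern_expect -big_split; apply: eq_bigr => w _; rewrite mulrDr. Qed.

Lemma bern_expectMr (c : R) (X : (nat -> bool) -> R) :
  bern_expect T p (fun o => X o * c) = bern_expect T p X * c.
Proof. by rewrite /bern_expect mulr_suml; apply: eq_bigr => w _; rewrite mulrA. Qed.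

Lemma bern_expect_sum (F : nat -> (nat -> bool) -> R) m n :
  bern_expect T p (fun o => \sum_(m <= i < n) F i o) =
  \sum_(m <= i < n) bern_expect T p (F i).
Proof.
by rewrite /bern_expect; under eq_bigr do rewrite mulr_sumr; exact: exchange_big.
Qed.

Lemma obs_ofE (w : {ffun 'I_T -> bool}) (j : 'I_T) : obs_of w j.+1 = w j.
Proof.
rewrite /obs_of /=; case: insubP => [k _ kj|]; last by rewrite ltn_ord.
by congr (w _); apply: val_inj.
Qed.

(* Expand the product of the weights over all outcomes coordinatewise; only
   the factor of coordinate [i] does not sum to one. *)
Lemma bern_expect_obs i : (1 <= i <= T)%N ->
  bern_expect T p (fun o => if o i then 1 else 0) = p i.
Proof.
case: i => // i /andP[_ iT]; pose j : 'I_T := Ordinal iT.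
pose F (k : 'I_T) (b : bool) := (if b then p k.+1 else 1 - p k.+1) *
                                (if k == j then (if b then 1 else 0) else 1).
rewrite /bern_expect /bern_weight (eq_bigr (fun w : {ffun _} => \prod_k F k (w k))).
  rewrite -(bigA_distr_bigA F) (bigD1 j) //= big_bool /= /F eqxx big1 ?mulr1.
    by ring.
  by move=> k kj; rewrite big_bool /= (negbTE kj); ring.
move=> w _; rewrite big_split /=; congr (_ * _).
by rewrite -big_mkcond big_pred1_eq -(obs_ofE w j).
Qed.

Lemma bern_expect_ipw (a : nat -> R) :
  bern_expect T p (fun o => \sum_(1 <= i < T.+1) a i * ipw p o i)
  = \sum_(1 <= i < T.+1) a i.
Proof.
rewrite bern_expect_sum big_nat [RHS]big_nat; apply: eq_bigr => i /andP[i1 iT].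
have /andP[p0 _] := p_prob i1.
under [X in bern_expect _ _ X]funext => o.
  rewrite /ipw mulrCA; over.
by rewrite bern_expectMr bern_expect_obs ?i1 // mulrC divfK ?gt_eqF.
Qed.

End BernoulliExpectation.

Theorem theorem2 (R : realType) (alpha B sigma mu : R) (P : probability R R)
  (rstar : nat -> R) (p : nat -> R) (eta : nat -> R) (r1 : R)
  (r : (nat -> bool) -> nat -> R) (T : nat) (q : R) :
  0 < alpha < 1 -> 0 < B ->
  bounded_density_on B P -> 0 < sigma ->
  (forall x, derivable (regR alpha sigma P) x 1) ->
  0 < mu -> strongly_convex mu (regR alpha sigma P) ->
  (forall t, (1 <= t)%N -> 0 <= rstar t <= B) ->
  (forall t, (1 <= t)%N -> 0 < p t <= 1) ->
  (forall t, (1 <= t)%N -> 0 < eta t) ->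
  (forall s t, (1 <= s)%N -> (s <= t)%N -> eta t <= eta s) ->
  0 <= r1 <= B ->
  (* IM-OCP thresholds, as functions of the feedback sequence obs *)
  (forall obs, r obs 1%N = r1) ->
  (forall obs t, (2 <= t)%N ->
     derive1 (regR alpha sigma P) (r obs t) =
     derive1 (regR alpha sigma P) (r obs t.-1)
     - eta t.-1 * (alpha - (if r obs t.-1 < rstar t.-1 then 1 else 0))
         * ((if obs t.-1 then 1 else 0) / p t.-1)) ->
  (1 <= T)%N ->
  (* q = q_alpha(r*_{1:T}) : a minimizer of the cumulative quantile loss *)
  (forall u, \sum_(1 <= i < T.+1) qloss alpha q (rstar i)
             <= \sum_(1 <= i < T.+1) qloss alpha u (rstar i)) ->
  bern_expect T p (fun obs =>
      \sum_(1 <= i < T.+1) qloss alpha (r obs i) (rstar i) * ((if obs i then 1 else 0) / p i))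
  - \sum_(1 <= i < T.+1) qloss alpha q (rstar i)
  <= bern_expect T p (fun obs =>
        \big[Num.max/bregman (regR alpha sigma P) q (r obs 1%N)]_(1 <= t < T.+1)
           bregman (regR alpha sigma P) q (r obs t)) / eta T
     + (2 * mu * \big[Num.min/p 1%N]_(1 <= t < T.+1) p t)^-1
       * \sum_(1 <= i < T.+1) eta i.
Proof.
move=> alpha01 _ _ _ R_der mu_gt0 R_sconvex _ p_prob eta_gt0 eta_noninc _ _ upd T1 _.
have p_gt0 t : (1 <= t)%N -> 0 < p t by move=> /p_prob /andP[].
have pathwise obs := ipw_mirror_descent_regret R_der R_sconvex mu_gt0 q alpha01
  p_gt0 eta_gt0 eta_noninc (fun t t1 => upd obs t.+1 t1) T1.
set f := regR alpha sigma P.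
pose D o := \big[Num.max/bregman f q (r o 1%N)]_(1 <= t < T.+1) bregman f q (r o t).
pose Q o := \sum_(1 <= i < T.+1) qloss alpha q (rstar i) * ipw p o i.
pose S o := \sum_(1 <= i < T.+1) eta i / (p i * (2 * mu)) * ipw p o i.
apply: (@le_trans _ _ (bern_expect T p (fun o => Q o + (D o / eta T + S o))
                       - \sum_(1 <= i < T.+1) qloss alpha q (rstar i))).
  by rewrite lerD2r; apply: ler_bern_expect.
rewrite !bern_expectD !bern_expect_ipw // bern_expectMr // addrAC subrr add0r.
rewrite lerD2l mulrC; apply: sum_div_le_div_bigmin => // [|i i1].
  by rewrite mulr_gt0.
exact/ltW/eta_gt0.
Qed.
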